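(* Let $\mathcal{X},\mathcal{Y},\mathcal{B}\ge 1$ and $D\ge1$ be integers. Consider the operator variables $\{\rho_x\}_{x=1}^{\mathcal{X}}\cup\{M_y^b\}_{y\in[\mathcal{Y}],b\in[\mathcal{B}]}$, and let the feasible set $\Xi$ be the set of all tuples of $D\times D$ complex matrices satisfying $\rho_x\succeq0$, $M_y^b\succeq0$ and $\sum_b M_y^b=\mathbb{1}$ for every $y$. Let $\mathcal{A}$ be the group of all permutations $\pi$ of the index set of these $\mathcal{X}+\mathcal{B}\mathcal{Y}$ variables such that for every feasible tuple $(\overline X_i)_i\in\Xi$, the permuted tuple $(\overline X_{\pi^{-1}(i)})_i$ is again in $\Xi$. Then every element of $\mathcal{A}$ can be written uniquely as a product $\boldsymbol{\xi}\,\boldsymbol{\psi}\,\boldsymbol{\beta_1}\cdots\boldsymbol{\beta_{\mathcal{Y}}}$, where: (i) $\boldsymbol{\xi}$, for $\xi\in S_{\mathcal{X}}$, acts by $\rho_x\mapsto\rho_{\xi(x)}$, $M_y^b\mapsto M_y^b$; (ii) $\boldsymbol{\psi}$, for $\psi\in S_{\mathcal{Y}}$, acts by $\rho_x\mapsto\rho_x$, $M_y^b\mapsto M_{\psi(y)}^b$; (iii) $\boldsymbol{\beta_y}$, for $\beta_y\in S_{\mathcal{B}}$, acts by $\rho_x\mapsto\rho_x$, $M_y^b\mapsto M_y^{\beta_y(b)}$, and $M_{y'}^b\mapsto M_{y'}^b$ for $y'\ne y$. In particular $|\mathcal{A}|=\mathcal{X}!\,\mathcal{Y}!\,(\mathc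al{B}!)^{\mathcal{Y}}$.
   Context: This is the prepare-and-measure scenario: states $\rho_x$ indexed by inputs $x$ and measurements $\{M_y^b\}_b$ indexed by inputs $y$ with outcomes $b$. $S_n$ denotes the symmetric group on $n$ elements. A permutation $\pi$ of variable indices acts on a tuple of matrices by relabelling the variables. *)

From HB Require Import structures.
From mathcomp Require Import all_boot all_order all_algebra all_fingroup.
From mathcomp Require Import spectral complex.
From mathcomp Require Import boolp reals.
Set Implicit Arguments. Unset Strict Implicit. Unset Printing Implicit Defensive.
Import Order.TTheory GRing.Theory Num.Theory.
Local Open Scope ring_scope.
Local Open Scope sesquilinear_scope.

Definition psdmx (C : numClosedFieldType) (D : nat) (A : 'M[C]_D) : Prop :=
  A ^t* = A /\ forall v : 'rV[C]_D, 0 <= (v *m A *m v ^t*) 0 0.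

(* Index set of the variables: inl x  <-> rho_x ;  inr (y, b) <-> M_y^b. *)
Definition Index (X Y B : nat) : finType := ('I_X + 'I_Y * 'I_B)%type.

Definition feasible (C : numClosedFieldType) (X Y B D : nat)
    (T : Index X Y B -> 'M[C]_D) : Prop :=
  (forall x : 'I_X, psdmx (T (inl x))) /\
  (forall (y : 'I_Y) (b : 'I_B), psdmx (T (inr (y, b)))) /\
  (forall y : 'I_Y, \sum_(b < B) T (inr (y, b)) = 1%:M).

Definition symA (C : numClosedFieldType) (X Y B D : nat) : {set {perm Index X Y B}} :=
  [set pi : {perm Index X Y B} |
     `[< forall T : Index X Y B -> 'M[C]_D,
           feasible T -> feasible (fun i => T ((pi^-1)%g i)) >] ].

Definition xi_fun X Y B (xi : {perm 'I_X}) (i : Index X Y B) : Index X Y B :=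
  match i with inl x => inl (xi x) | inr p => inr p end.
Lemma xi_fun_inj X Y B xi : injective (@xi_fun X Y B xi).
Proof. move=> [a|a] [b|b] //= [] /perm_inj ->. done. Qed.
Definition xi_perm X Y B xi : {perm Index X Y B} := perm (@xi_fun_inj X Y B xi).

Definition psi_fun X Y B (psi : {perm 'I_Y}) (i : Index X Y B) : Index X Y B :=
  match i with inl x => inl x | inr (y, b) => inr (psi y, b) end.
Lemma psi_fun_inj X Y B psi : injective (@psi_fun X Y B psi).
Proof. move=> [a|[a1 a2]] [b|[b1 b2]] //= [] /perm_inj -> ->. done. Qed.
Definition psi_perm X Y B psi : {perm Index X Y B} := perm (@psi_fun_inj X Y B psi).

Definition beta_fun X Y B (y0 : 'I_Y) (beta : {perm 'I_B}) (i : Index X Y B)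
  : Index X Y B :=
  match i with
  | inl x => inl x
  | inr (y, b) => inr (y, if y == y0 then beta b else b)
  end.
Lemma beta_fun_inj X Y B y0 beta : injective (@beta_fun X Y B y0 beta).
Proof.
move=> [a|[a1 a2]] [b|[b1 b2]] //= [] <-.
case: eqP => _; last by move=> ->.
by move/perm_inj => ->.
Qed.
Definition beta_perm X Y B y0 beta : {perm Index X Y B} :=
  perm (@beta_fun_inj X Y B y0 beta).

Definition decomp X Y B
    (t : {perm 'I_X} * {perm 'I_Y} * {ffun 'I_Y -> {perm 'I_B}}) : {perm Index X Y B} :=
  (@xi_perm X Y B t.1.1 * @psi_perm X Y B t.1.2 *
     \prod_(y < Y) @beta_perm X Y B y (t.2 y))%g.

From HB Require Import structures.
From mathcomp Require Import all_boot all_order all_algebra all_fingroup.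
From mathcomp Require Import spectral complex.
From mathcomp Require Import boolp reals.
Import Order.TTheory GRing.Theory Num.Theory.
Set Implicit Arguments. Unset Strict Implicit. Unset Printing Implicit Defensive.
Local Open Scope ring_scope.

(* Feasible tuples of scalar 0/1 matrices amount to choosing one outcome b for
   every measurement y, the states being arbitrary, so pi^-1 must preserve such
   choices.  Toggling a state in a choice shows that pi^-1 sends no effect to a
   state, and a choice selecting effects in two different blocks shows that it
   sends each block {M_y^b}_b into a single block.  A permutation sending blocks
   into blocks permutes the blocks and is of the form xi psi beta_1 ... beta_Y;
   conversely each such product preserves the feasible set, and the
   factorisation is unique, whence the count. *)

Lemma psdmx_scalar (C : numClosedFieldType) D (a : C) :
  0 <= a -> psdmx (a%:M : 'M[C]_D).
Proof.
move=> a_ge0; split.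
  by apply/matrixP => i j; rewrite !mxE eq_sym rmorphMn /= geC0_conj.
move=> v; rewrite mul_mx_scalar -scalemxAl mxE mulr_ge0 // mxE.
by apply: sumr_ge0 => j _; rewrite !mxE mul_conjC_ge0.
Qed.

Lemma sum_nat_bool_eq1 (I : finType) (P : pred I) :
  (\sum_i P i = 1)%N <-> exists! i, P i.
Proof.
split=> [/eqP/sum_nat_eq1 [i [_ Pi P'0]] | [i [Pi Puniq]]].
  exists i; split=> [|j Pj]; first by case: (P i) Pi.
  by case: (eqVneq j i) => [//|/P'0/(_ isT)]; rewrite Pj.
apply/eqP/sum_nat_eq1; exists i; split=> // [|j ji _]; first by rewrite Pi.
by apply/eqP; rewrite eqb0; apply: contra ji => /Puniq ->.
Qed.

Section Symmetries.
Variables X Y B : nat.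
Implicit Types (t : {perm 'I_X} * {perm 'I_Y} * {ffun 'I_Y -> {perm 'I_B}}).

Lemma prod_beta_permE (f : 'I_Y -> {perm 'I_B}) (r : seq 'I_Y) (i : Index X Y B) :
  uniq r ->
  (\prod_(y <- r) @beta_perm X Y B y (f y))%g i =
    if i is inr (y, b) then inr (y, if y \in r then f y b else b) else i.
Proof.
elim: r i => [|y0 r IHr] i; first by rewrite big_nil perm1; case: i => [|[]].
rewrite big_cons /= => /andP[y0r uniq_r]; rewrite permM IHr // permE.
case: i => [//|[y b]] /=; rewrite in_cons.
by case: (eqVneq y y0) => [->|]; rewrite ?(negPf y0r).
Qed.

Lemma decompE_inl t x : decomp t (inl x) = inl (t.1.1 x) :> Index X Y B.
Proof.
by rewrite /decomp !permM !permE /= prod_beta_permE ?index_enum_uniq.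
Qed.

Lemma decompE_inr t y b :
  decomp t (inr (y, b)) = inr (t.1.2 y, t.2 (t.1.2 y) b) :> Index X Y B.
Proof.
by rewrite /decomp !permM !permE /= prod_beta_permE ?index_enum_uniq ?mem_index_enum.
Qed.

Lemma decomp_inj : (0 < B)%N -> injective (@decomp X Y B).
Proof.
move=> B_gt0 [[xi psi] f] [[xi' psi'] f'] eq_decomp.
have eqE i : decomp (xi, psi, f) i = decomp (xi', psi', f') i by rewrite eq_decomp.
have eq_xi : xi = xi'.
  by apply/permP => x; have := eqE (inl x); rewrite !decompE_inl => -[].
have eq_psi : psi = psi'.
  apply/permP => y; have := eqE (inr (y, Ordinal B_gt0)).
  by rewrite !decompE_inr => -[].
subst xi' psi'; congr (_, _, _); apply/ffunP => z; apply/permP => b.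
have := eqE (inr ((psi^-1)%g z, b)).
by rewrite !decompE_inr /= permKV => -[].
Qed.

Definition decomp_inv t : {perm 'I_X} * {perm 'I_Y} * {ffun 'I_Y -> {perm 'I_B}} :=
  (t.1.1^-1, t.1.2^-1, [ffun y => (t.2 (t.1.2 y))^-1])%g.

Lemma decompV t : ((decomp t)^-1)%g = decomp (decomp_inv t) :> {perm Index X Y B}.
Proof.
apply/permP => i; apply: (canLR (permK (decomp t))).
case: i => [x|[y b]]; by rewrite ?decompE_inl ?decompE_inr /= ?ffunE !permKV.
Qed.

Lemma decomp_of_block_perm (p : {perm Index X Y B}) : (0 < B)%N ->
    (forall y, exists z, forall b, exists c, p (inr (y, b)) = inr (z, c)) ->
  exists t, p = decomp t.
Proof.
move=> B_gt0 /fin_all_exists [g p_block].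
have /fin_all_exists [h pE] y :
    exists hy : 'I_B -> 'I_B, forall b, p (inr (y, b)) = inr (g y, hy b).
  exact: fin_all_exists (p_block y).
have h_inj y : injective (h y).
  move=> b b' eq_h.
  by have /perm_inj[] : p (inr (y, b)) = p (inr (y, b')) by rewrite !pE eq_h.
have g_inj : injective g.
  move=> y y' eq_g; have [hV _ hVK] := injF_bij (h_inj y).
  have b0 := Ordinal B_gt0.
  have : p (inr (y, hV (h y' b0))) = p (inr (y', b0)) by rewrite !pE hVK eq_g.
  by move/perm_inj => -[].
have /fin_all_exists [xi pE_inl] x : exists x', p (inl x) = inl x'.
  case E: (p (inl x)) => [x'|[z c]]; first by exists x'.
  have [gV _ gVK] := injF_bij g_inj; have [hV _ hVK] := injF_bij (h_inj (gV z)).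
  have : p (inr (gV z, hV c)) = p (inl x) by rewrite pE gVK hVK E.
  by move/perm_inj.
have xi_inj : injective xi.
  move=> x x' eq_xi.
  by have /perm_inj[] : p (inl x) = p (inl x') by rewrite !pE_inl eq_xi.
pose psi := perm g_inj.
exists (perm xi_inj, psi, [ffun z => perm (h_inj ((psi^-1)%g z))]).
apply/permP => -[x|[y b]].
  by rewrite decompE_inl permE pE_inl.
by rewrite decompE_inr ffunE permK !permE pE.
Qed.

Lemma feasible_decomp (C : numClosedFieldType) D t (T : Index X Y B -> 'M[C]_D) :
  feasible T -> feasible (fun i => T (decomp t i)).
Proof.
case=> T_rho [T_M T_sum]; split; [|split] => [x|y b|y].
- by rewrite decompE_inl.
- by rewrite decompE_inr.
under eq_bigr do rewrite decompE_inr.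
by rewrite -(T_sum (t.1.2 y)) [RHS](reindex_inj (@perm_inj _ (t.2 (t.1.2 y)))).
Qed.

Lemma decomp_symA (C : numClosedFieldType) D t : decomp t \in symA C X Y B D.
Proof.
by rewrite inE decompV; apply/asboolP => T /(feasible_decomp (decomp_inv t)).
Qed.

Definition one_per_block (chi : Index X Y B -> bool) : Prop :=
  forall y : 'I_Y, exists! b, chi (inr (y, b)).

Definition selection (c : 'I_Y -> 'I_B) (A : pred 'I_X) (i : Index X Y B) : bool :=
  match i with inl x => A x | inr (y, b) => b == c y end.

Lemma one_per_block_selection c A : one_per_block (selection c A).
Proof. by move=> y; exists (c y); split=> /= [|b /eqP]. Qed.

Section SelectionPreserving.
Variable p : {perm Index X Y B}.
Hypothesis p_one_per_block :
  forall chi, one_per_block chi -> one_per_block (fun i => chi (p i)).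

Lemma block_image_inr y b : exists q, p (inr (y, b)) = inr q.
Proof.
case E: (p (inr (y, b))) => [x|q]; last by exists q.
have [b0 [sel_b0 _]] := p_one_per_block (one_per_block_selection (fun=> b) pred0) y.
have [b1 [_ sel_uniq]] := p_one_per_block (one_per_block_selection (fun=> b) (pred1 x)) y.
have b1_b : b1 = b by apply: sel_uniq; rewrite E /= eqxx.
have b1_b0 : b1 = b0 by apply: sel_uniq; case: (p _) sel_b0.
by move: sel_b0; rewrite -b1_b0 b1_b E.
Qed.

Lemma block_image_same_block y b b' z z' c c' :
  p (inr (y, b)) = inr (z, c) -> p (inr (y, b')) = inr (z', c') -> z = z'.
Proof.
move=> E E'; have [//|z'z] := eqVneq z z'.
pose c2 w := if w == z then c else c'.
have [b1 [_ sel_uniq]] := p_one_per_block (one_per_block_selection c2 pred0) y.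
have b1_b : b1 = b by apply: sel_uniq; rewrite E /= /c2 eqxx.
have b1_b' : b1 = b' by apply: sel_uniq; rewrite E' /= /c2 (ifN_eqC _ _ z'z).
by move: E'; rewrite -b1_b' b1_b E => -[].
Qed.

Lemma block_image_block : (0 < B)%N ->
  forall y, exists z, forall b, exists c, p (inr (y, b)) = inr (z, c).
Proof.
move=> B_gt0 y; have [[z c] E0] := block_image_inr y (Ordinal B_gt0).
exists z => b; have [[z' c'] E] := block_image_inr y b.
by exists c'; rewrite (block_image_same_block E0 E).
Qed.

End SelectionPreserving.

Definition indicator_mx (C : numClosedFieldType) D (chi : Index X Y B -> bool)
  (i : Index X Y B) : 'M[C]_D := (chi i)%:R%:M.

Lemma feasible_indicator (C : numClosedFieldType) D (chi : Index X Y B -> bool) :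
  (0 < D)%N -> feasible (indicator_mx C D chi) <-> one_per_block chi.
Proof.
move=> D_gt0.
have sumE y : \sum_(b < B) indicator_mx C D chi (inr (y, b)) =
              (\sum_(b < B) chi (inr (y, b)))%N%:R%:M.
  by rewrite natr_sum raddf_sum.
split=> [[_ [_ sum1]] y | opb].
  apply/sum_nat_bool_eq1; have := sum1 y; rewrite sumE.
  move/matrixP/(_ (Ordinal D_gt0) (Ordinal D_gt0)); rewrite !mxE eqxx /= mulr1n.
  by move/eqP; rewrite pnatr_eq1 => /eqP.
split; [|split] => [x|y b|y].
- exact/psdmx_scalar/ler0n.
- exact/psdmx_scalar/ler0n.
- by rewrite sumE (proj2 (sum_nat_bool_eq1 _) (opb y)).
Qed.

Lemma symA_one_per_block (C : numClosedFieldType) D pi : (0 < D)%N ->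
    pi \in symA C X Y B D ->
  forall chi, one_per_block chi -> one_per_block (fun i => chi ((pi^-1)%g i)).
Proof.
move=> D_gt0; rewrite inE => /asboolP pi_feasible chi.
by move/(feasible_indicator C _ D_gt0)/pi_feasible/(feasible_indicator C _ D_gt0).
Qed.

Lemma symA_decomp (C : numClosedFieldType) D pi : (0 < B)%N -> (0 < D)%N ->
  pi \in symA C X Y B D -> exists t, pi = decomp t.
Proof.
move=> B_gt0 D_gt0 /(symA_one_per_block D_gt0) piV_opb.
have [t piV] := decomp_of_block_perm B_gt0 (block_image_block piV_opb B_gt0).
by exists (decomp_inv t); rewrite -decompV -piV invgK.
Qed.

Lemma symA_decompE (C : numClosedFieldType) D : (0 < B)%N -> (0 < D)%N ->
  symA C X Y B D = @decomp X Y B @: setT.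
Proof.
move=> B_gt0 D_gt0; apply/setP => pi; apply/idP/imsetP => [|[t _ ->]].
  by case/(symA_decomp B_gt0 D_gt0) => t ->; exists t.
exact: decomp_symA.
Qed.

End Symmetries.

Theorem proposition1 (R : realType) (X Y B D : nat) :
  (0 < X)%N -> (0 < Y)%N -> (0 < B)%N -> (0 < D)%N ->
  (forall pi : {perm Index X Y B}, pi \in @symA R[i] X Y B D ->
     exists! t : {perm 'I_X} * {perm 'I_Y} * {ffun 'I_Y -> {perm 'I_B}},
       pi = @decomp X Y B t) /\
  #|@symA R[i] X Y B D| = (X`! * Y`! * (B`! ^ Y))%N.
Proof.
move=> _ _ B_gt0 D_gt0; split.
  move=> pi /(symA_decomp B_gt0 D_gt0) [t ->].
  by exists t; split=> // t' /(decomp_inj B_gt0).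
rewrite symA_decompE // card_imset; last exact: decomp_inj.
by rewrite cardsT !card_prod card_ffun !card_Sn !card_ord.
Qed.
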